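(* Let $G$ be a finite simple graph with $V(G)=\{1,\dots,n\}$, vertex weight function $w_1$, and an edge weight function $w$ taking only positive real values. Then $G$ is a forest if and only if $\phi_{(w,w_1)}(G,x)=\eta_{(w,w_1)}(G,x)$.
   Context: A vertex weight function $w_1$ assigns a real number (possibly $0$) to each vertex; induced subgraphs carry restricted weights. For $A\subseteq E(G)$, $w(A)=\prod_{e\in A}w(e)$. $\mu_w(G,x)=\sum_{M}(-1)^{|M|}|w(M)|^2x^{n-2|M|}$ over all matchings $M$ (including empty). $\eta_{(w,w_1)}(G,x)=\sum_{S\subseteq V(G)}(-1)^{|V(G)\setminus S|}\big(\prod_{v\in V(G)\setminus S}w_1(v)\big)\mu_w(G[S],x)$ with $G[S]$ the induced subgraph and $\mu_w$ of the empty graph equal to $1$. The weighted adjacency matrix $B=[b_{uv}]$ has $b_{uv}=w(e_{uv})$ if $uv$ is an edge and $u<v$, $b_{uu}=w_1(u)$, $b_{uv}=\overline{w(e_{vu})}$ if $vu$ is an edge and $u>v$, and $0$ otherwise; $\phi_{(w,w_1)}(G,x)=\det(xI-B)$. *)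

From HB Require Import structures.
From mathcomp Require Import all_boot all_order all_algebra.
Set Implicit Arguments. Unset Strict Implicit. Unset Printing Implicit Defensive.
Import Order.TTheory GRing.Theory Num.Theory.
Local Open Scope ring_scope.

(* A finite simple graph on vertex set 'I_n = {0..n-1} (relabelling of
   {1..n}) is an adjacency relation [e] that is symmetric and irreflexive. *)
Definition simple_graph (n : nat) (e : rel 'I_n) : Prop :=
  symmetric e /\ irreflexive e.

Definition graph_cycle (n : nat) (e : rel 'I_n) (c : seq 'I_n) : bool :=
  [&& (3 <= size c)%N, uniq c & cycle e c].

Definition forest (n : nat) (e : rel 'I_n) : Prop :=
  forall c : seq 'I_n, ~~ graph_cycle e c.

Definition is_edge (n : nat) (e : rel 'I_n) (m : {set 'I_n}) : bool :=
  [exists u, exists v, e u v && (m == [set u; v])].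

Definition matching_in (n : nat) (e : rel 'I_n) (S : {set 'I_n})
    (M : {set {set 'I_n}}) : bool :=
  [forall m in M, is_edge e m && (m \subset S)] &&
  [forall m1 in M, forall m2 in M, (m1 != m2) ==> [disjoint m1 & m2]].

Section Polys.
Variable R : realFieldType.
Variable n : nat.
Variable e : rel 'I_n.
(* edge weight function: w [set u; v] is the weight of the edge uv *)
Variable w : {set 'I_n} -> R.
Variable w1 : 'I_n -> R.

Definition mu_w (S : {set 'I_n}) : {poly R} :=
  \sum_(M : {set {set 'I_n}} | matching_in e S M)
     ((-1) ^+ #|M| * `|\prod_(m in M) w m| ^+ 2) *: 'X^((#|S| - 2 * #|M|)%N).

Definition eta_w : {poly R} :=
  \sum_(S : {set 'I_n})
     ((-1) ^+ #|~: S| * \prod_(v in ~: S) w1 v) *: mu_w S.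

(* weighted adjacency matrix B (weights real, so conjugation is trivial) *)
Definition wadj : 'M[R]_n :=
  \matrix_(u, v) (if u == v then w1 u
                  else if e u v then w [set u; v] else 0).

Definition phi_w : {poly R} := char_poly wadj.
End Polys.

(* Expanding det(xI - B) over permutations s, the term of s is
   sgn s * prod_(s i <> i) (- B i (s i)) * prod_(s i = i) (x - w1 i), and it
   vanishes unless s moves every vertex along an edge.  The involutions among
   these permutations correspond to matchings and give exactly the terms of
   eta (Sachs' argument), so phi - eta is the sum over the permutations along
   edges that have an orbit of length at least 3; such an orbit traces a cycle
   of G.  Hence phi = eta for a forest.  Conversely, if g is the girth of G,
   such permutations move at least g vertices, so the coefficient of x^(n-g)
   in phi - eta only collects the single g-cycles, each contributing
   - prod w < 0; thus phi <> eta. *)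

From HB Require Import structures.
From mathcomp Require Import all_boot all_order all_algebra all_fingroup.
From mathcomp Require Import lra zify.
Set Implicit Arguments. Unset Strict Implicit. Unset Printing Implicit Defensive.
Import Order.TTheory GRing.Theory Num.Theory.
Local Open Scope ring_scope.

Lemma set2_eq_cases (T : finType) (a b c d : T) :
  [set a; b] = [set c; d] -> (a = c /\ b = d) \/ (a = d /\ b = c).
Proof.
move=> E.
have: a \in [set c; d] by rewrite -E set21.
have: b \in [set c; d] by rewrite -E set22.
have: c \in [set a; b] by rewrite E set21.
have: d \in [set a; b] by rewrite E set22.
rewrite !inE; by do 4! case/orP=> /eqP ?; subst; auto.
Qed.

Section PermSupport.
Variable T : finType.
Implicit Types (s : {perm T}) (x y : T).

Definition perm_supp s : {set T} := [set x | s x != x].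

Definition perm_invol s : bool := [forall x, s (s x) == x].

Definition perm_pairs s : {set {set T}} := [set [set x; s x] | x in perm_supp s].

Lemma perm_involP s : reflect (involutive s) (perm_invol s).
Proof. by apply: (iffP forallP) => sK x; apply/eqP. Qed.

Lemma perm_supp_invol s x : involutive s ->
  (s x \in perm_supp s) = (x \in perm_supp s).
Proof. by move=> sK; rewrite !inE sK eq_sym. Qed.

Lemma perm_pair_invol s x y : involutive s ->
  y \in [set x; s x] -> [set y; s y] = [set x; s x].
Proof. by move=> sK /set2P[] ->; rewrite ?sK 1?setUC. Qed.

Lemma mem_perm_pair s m x : involutive s -> m \in perm_pairs s ->
  (x \in perm_supp s) && ([set x; s x] == m) = (x \in m).
Proof.
move=> sK /imsetP[y ysupp ->]; apply/idP/idP => [/andP[_ /eqP <-]|xm].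
  exact: set21.
by rewrite (perm_pair_invol sK xm) eqxx andbT; case/set2P: xm => ->; rewrite ?perm_supp_invol.
Qed.

Lemma big_perm_pairs (R : Type) (idx : R) (op : Monoid.com_law idx) s
    (F : {set T} -> R) :
  involutive s ->
  \big[op/idx]_(x in perm_supp s) F [set x; s x] =
  \big[op/idx]_(m in perm_pairs s) op (F m) (F m).
Proof.
move=> sK; rewrite (partition_big (fun x => [set x; s x]) (mem (perm_pairs s))); last first.
  by move=> x xsupp; rewrite inE (imset_f (fun x => [set x; s x])).
apply: eq_bigr => m mpairs.
rewrite (eq_bigr (fun _ => F m)) => [|x /andP[_ /eqP-> //]].
rewrite (eq_bigl (mem m)) => [|x]; last exact: mem_perm_pair.
case/imsetP: mpairs => x; rewrite inE => sx ->.
by rewrite big_setU1 ?big_set1 // inE eq_sym.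
Qed.

Lemma card_supp_invol s : involutive s -> #|perm_supp s| = (2 * #|perm_pairs s|)%N.
Proof.
move=> sK; rewrite -sum1_card (big_perm_pairs addn (fun _ => 1%N) sK).
by rewrite sum_nat_const mulnC.
Qed.

Lemma porbit_fix s x : s x = x -> porbit s x = [set x].
Proof.
move=> sx; apply/setP=> y; rewrite inE; apply/porbitP/eqP => [[k ->]|->].
  by rewrite permX_fix.
by exists 0%N; rewrite expg0 perm1.
Qed.

Lemma porbit_invol s x : s (s x) = x -> porbit s x = [set x; s x].
Proof.
move=> ssx; apply/setP=> y; rewrite !inE; apply/porbitP/idP => [[k ->]|/orP[]/eqP->].
- have iterE : iter k s x = if odd k then s x else x.
    by elim: k => //= k ->; case: (odd k).
  by rewrite permX iterE; case: (odd k); rewrite eqxx ?orbT.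
- by exists 0%N; rewrite expg0 perm1.
- by exists 1%N; rewrite expg1.
Qed.

Lemma porbit_supp s x : s (s x) != x -> porbit s x \subset perm_supp s.
Proof.
move=> ssx; apply/subsetP=> y yx; rewrite inE; apply: contra ssx => /eqP sy.
have: x \in porbit s y by rewrite porbit_sym.
by rewrite porbit_fix // inE => /eqP ->; rewrite !sy.
Qed.

(* Fixed points are singleton orbits; the other orbits are those of the support. *)
Lemma card_porbits s :
  #|porbits s| = (#|~: perm_supp s| + #|porbit s @: perm_supp s|)%N.
Proof.
have porbitsE : porbits s = set1 @: (~: perm_supp s) :|: porbit s @: perm_supp s.
  have -> : set1 @: (~: perm_supp s) = porbit s @: (~: perm_supp s).
    by apply: eq_in_imset => x; rewrite !inE negbK => /eqP /porbit_fix.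
  rewrite -imsetU setUC setUCr; apply/setP=> A.
  by apply/imsetP/imsetP => -[x _ ->]; exists x.
rewrite porbitsE cardsU card_imset; last exact: set1_inj.
suff -> : set1 @: (~: perm_supp s) :&: porbit s @: perm_supp s = set0.
  by rewrite cards0 subn0.
apply/setP=> A; rewrite !inE; apply/negP=> /andP[/imsetP[y ysupp ->] /imsetP[x xsupp Ex]].
have: x \in [set y] by rewrite Ex porbit_id.
by rewrite inE => /eqP exy; move: ysupp xsupp; rewrite !inE exy => /negP.
Qed.

Lemma odd_perm_invol s : involutive s -> odd_perm s = odd #|perm_pairs s|.
Proof.
move=> sK; rewrite /odd_perm card_porbits.
have -> : porbit s @: perm_supp s = perm_pairs s.
  by apply: eq_in_imset => x _; rewrite porbit_invol.
rewrite -(cardsC (perm_supp s)) card_supp_invol // !oddD /=.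
by case: (odd #|perm_pairs s|); case: (odd #|~: perm_supp s|).
Qed.

Lemma odd_perm_cycle s x : perm_supp s = porbit s x -> x \in perm_supp s ->
  odd_perm s = ~~ odd #|perm_supp s|.
Proof.
move=> suppE xsupp; rewrite /odd_perm card_porbits.
have -> : porbit s @: perm_supp s = [set perm_supp s].
  apply/setP=> A; rewrite inE; apply/imsetP/eqP => [[y ysupp ->]|->].
    by rewrite suppE; apply/eqP; rewrite eq_porbit_mem -suppE.
  by exists x; rewrite // suppE.
rewrite -(cardsC (perm_supp s)) cards1 !oddD /=.
by case: (odd #|perm_supp s|); case: (odd #|~: perm_supp s|).
Qed.

End PermSupport.

Section Matchings.
Variables (n : nat) (e : rel 'I_n).
Hypotheses (e_sym : symmetric e) (e_irr : irreflexive e).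
Implicit Types (s : 'S_n) (S : {set 'I_n}) (M : {set {set 'I_n}}).

Definition perm_along s : bool := [forall i, (s i != i) ==> e i (s i)].

Definition matching_perm s : bool := perm_invol s && perm_along s.

Lemma perm_alongP s : reflect {in perm_supp s, forall i, e i (s i)} (perm_along s).
Proof.
apply: (iffP forallP) => sE i; first by rewrite inE; apply/implyP.
by apply/implyP => si; apply: sE; rewrite inE.
Qed.

Lemma matching_edge S M m : matching_in e S M -> m \in M ->
  exists u v, [/\ e u v, u != v, m = [set u; v] & m \subset S].
Proof.
case/andP=> /forall_inP edgeM _ mM.
case/andP: (edgeM m mM) => /existsP[u /existsP[v /andP[euv /eqP->]]] mS.
by exists u, v; split=> //; apply: contraTneq euv => ->; rewrite e_irr.
Qed.

Lemma matching_partner_uniq S M i j k : matching_in e S M -> j != i -> k != i ->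
  [set i; j] \in M -> [set i; k] \in M -> j = k.
Proof.
move=> /andP[_ /forall_inP/(_ _ _)/forall_inP disjM] ji ki jM kM.
have /implyP := disjM _ jM _ kM.
case: eqP => [E _ | _ /(_ isT)].
  by case: (set2_eq_cases E) => [[_ //]|[ik _]]; rewrite ik eqxx in ki.
by rewrite -setI_eq0 => /eqP/setP/(_ i); rewrite !inE !eqxx.
Qed.

Definition mate M i : 'I_n := odflt i [pick j | (j != i) && ([set i; j] \in M)].

Lemma mateP S M i : matching_in e S M ->
  (mate M i = i /\ forall j, j != i -> [set i; j] \notin M) \/
  (mate M i != i /\ [set i; mate M i] \in M).
Proof.
move=> HM; rewrite /mate; case: pickP => [j /andP[ji jM] | noj]; [right | left] => //=.
by split=> // j ji; apply/negP=> jM; move: (noj j); rewrite ji jM.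
Qed.

Lemma mateK S M : matching_in e S M -> involutive (mate M).
Proof.
move=> HM i; case: (mateP i HM) => [[mi _]|[ji jM]]; first by rewrite !mi.
case: (mateP (mate M i) HM) => [[_ none]|[kj kM]].
  by move: (none i); rewrite eq_sym ji setUC jM => /(_ isT).
by rewrite setUC in jM; apply: (matching_partner_uniq HM kj _ kM jM); rewrite eq_sym.
Qed.

(* [mate M] is injective for every matching [M]; the fallback [1] is never used. *)
Definition mate_perm M : 'S_n :=
  if injectiveP (mate M) is ReflectT mate_inj then perm mate_inj else 1%g.

Lemma mate_permE S M : matching_in e S M -> mate_perm M =1 mate M.
Proof.
move=> HM i; rewrite /mate_perm; case: injectiveP => [inj|ninj]; first by rewrite permE.
by case: ninj; apply: inv_inj; apply: mateK HM.
Qed.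

Lemma mate_perm_matching S M : matching_in e S M ->
  [/\ matching_perm (mate_perm M), perm_supp (mate_perm M) \subset S
    & perm_pairs (mate_perm M) = M].
Proof.
move=> HM; have mE := mate_permE HM.
have mateM i : mate M i != i -> [set i; mate M i] \in M.
  by case: (mateP i HM) => [[-> ]|[]//]; rewrite eqxx.
split.
- apply/andP; split.
    by apply/perm_involP => i; rewrite !mE (mateK HM).
  apply/perm_alongP => i; rewrite inE !mE => /mateM iM.
  have [u [v [euv _ E _]]] := matching_edge HM iM.
  by case: (set2_eq_cases E) => -[-> ->] //; rewrite e_sym.
- apply/subsetP=> i; rewrite inE mE => /mateM iM.
  have [u [v [_ _ _ iS]]] := matching_edge HM iM.
  by apply: (subsetP iS); rewrite set21.
- apply/setP=> m; apply/imsetP/idP => [[i]|mM].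
    by rewrite inE mE => /mateM iM ->.
  have [u [v [euv uv m_def _]]] := matching_edge HM mM; rewrite m_def in mM *.
  case: (mateP u HM) => [[_ none]|[mu uM]].
    by move: (none v); rewrite eq_sym uv mM => /(_ isT).
  have vE : mate M u = v by apply: (matching_partner_uniq HM mu _ uM mM); rewrite eq_sym.
  by exists u; rewrite ?inE mE vE // eq_sym.
Qed.

Lemma mate_perm_pairs s : matching_perm s ->
  mate (perm_pairs s) =1 s.
Proof.
case/andP=> /perm_involP sK _ i; rewrite /mate; case: pickP => [j /andP[ji /imsetP[k _ E]]|none] /=.
  by case: (set2_eq_cases E) => -[-> ->] //; rewrite sK.
case: (eqVneq (s i) i) => [-> //|si].
by move: (none (s i)); rewrite si (imset_f (fun i => [set i; s i])) // inE si.
Qed.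

Lemma perm_pairs_matching S s : matching_perm s ->
  matching_in e S (perm_pairs s) = (perm_supp s \subset S).
Proof.
case/andP=> /perm_involP sK /perm_alongP sE; apply/idP/idP.
  case/andP=> /forall_inP edgeM _; apply/subsetP=> i isupp.
  have /andP[_ iS] := edgeM _ (imset_f (fun i => [set i; s i]) isupp).
  by apply: (subsetP iS); rewrite set21.
move=> suppS; apply/andP; split.
  apply/forall_inP=> m /imsetP[i isupp ->]; apply/andP; split.
    apply/existsP; exists i; apply/existsP; exists (s i).
    by rewrite eqxx andbT sE.
  apply/subsetP=> x /set2P[] ->; apply: (subsetP suppS) => //.
  by rewrite perm_supp_invol.
apply/forall_inP=> m1 /imsetP[i _ ->]; apply/forall_inP=> m2 /imsetP[j _ ->].
apply/implyP; apply: contraR; rewrite -setI_eq0 => /set0Pn[x]; rewrite inE => /andP[xi xj].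
by rewrite -(perm_pair_invol sK xi) -(perm_pair_invol sK xj).
Qed.

Lemma big_matching (V : nmodType) S (F : {set {set 'I_n}} -> V) :
  \sum_(M | matching_in e S M) F M =
  \sum_(s | matching_perm s && (perm_supp s \subset S)) F (perm_pairs s).
Proof.
rewrite (reindex_onto (@perm_pairs _) mate_perm); last first.
  by move=> M HM; case: (mate_perm_matching HM).
apply: eq_bigl => s; apply/idP/idP.
  case/andP=> HM /eqP <-; have [sM suppS _] := mate_perm_matching HM.
  by rewrite sM suppS.
case/andP=> sM suppS; rewrite perm_pairs_matching // suppS /=.
apply/eqP/permP => i.
by rewrite (mate_permE (S := S)) ?perm_pairs_matching // mate_perm_pairs.
Qed.

End Matchings.

Section ComplementCharpoly.
Variables (R : comNzRingType) (n : nat) (w1 : 'I_n -> R).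
Implicit Types (D S : {set 'I_n}).

(* The factor of a term of det(xI - B) contributed by the fixed points of a
   permutation with support [D]. *)
Definition char_compl D : {poly R} := \prod_(i in ~: D) ('X - (w1 i)%:P).

Lemma size_char_compl D : size (char_compl D) = (#|~: D|).+1.
Proof. by rewrite /char_compl -big_enum size_prod_XsubC cardE. Qed.

Lemma char_compl_monic D : char_compl D \is monic.
Proof. by rewrite /char_compl -big_enum monic_prod_XsubC. Qed.

Lemma card_setC_ord D : #|~: D| = (n - #|D|)%N.
Proof. by rewrite cardsCs setCK card_ord. Qed.

Lemma coef_char_compl_supp D : (char_compl D)`_(n - #|D|) = 1.
Proof.
by have := monicP (char_compl_monic D); rewrite lead_coefE size_char_compl card_setC_ord.
Qed.

Lemma coef_char_compl_gt D k : (k < #|D|)%N -> (char_compl D)`_(n - k) = 0.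
Proof.
move=> kD; apply: nth_default; rewrite size_char_compl card_setC_ord.
by have := max_card D; rewrite card_ord; lia.
Qed.

Lemma char_compl_expand D :
  \sum_(S : {set 'I_n} | D \subset S)
     ((-1) ^+ #|~: S| * \prod_(v in ~: S) w1 v) *: 'X^(#|S| - #|D|) = char_compl D.
Proof.
have -> : char_compl D =
    \prod_i ((if i \in D then 1 else 'X) + (if i \in D then 0 else - (w1 i)%:P)).
  rewrite /char_compl big_mkcond /=; apply: eq_bigr => i _; rewrite inE.
  by case: (i \in D); rewrite ?addr0.
rewrite bigA_distr big_mkcond /=; apply: eq_bigr => S _.
case: (boolP (D \subset S)) => [DS|]; last first.
  by case/subsetPn => i iD iS; rewrite (bigD1 i) //= iD (negbTE iS) mul0r.
rewrite [RHS](bigID (mem S)) /=.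
rewrite (eq_bigr (fun i => if i \in D then 1 else 'X)) => [|i iS]; last by rewrite iS.
rewrite [X in _ = _ * X](eq_bigr (fun i => - (w1 i)%:P)) => [|i iS]; last first.
  by rewrite (negbTE iS) (contraNF (subsetP DS i) iS).
rewrite (eq_bigr (fun i => if i \notin D then 'X else 1)) => [|i _]; last by rewrite if_neg.
rewrite -big_mkcondr /= [X in _ = X * _](eq_bigl (mem (S :\: D))) => [|i]; last first.
  by rewrite !inE andbC.
rewrite prodr_const cardsD (setIidPr DS).
rewrite [X in _ = _ * X](eq_bigl (mem (~: S))) => [|i]; last by rewrite !inE.
rewrite prodrN -(rmorph_prod (@polyC R)) -mul_polyC rmorphM rmorph_sign.
by rewrite mulrC mulrA.
Qed.

End ComplementCharpoly.

Section PermExpansion.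
Variables (R : realFieldType) (n : nat) (e : rel 'I_n).
Variables (w : {set 'I_n} -> R) (w1 : 'I_n -> R).
Implicit Types (s : 'S_n).

Definition perm_weight s : R :=
  (-1) ^+ s * \prod_(i in perm_supp s) - wadj e w w1 i (s i).

Lemma phi_w_perm_sum :
  phi_w e w w1 = \sum_s perm_weight s *: char_compl w1 (perm_supp s).
Proof.
rewrite /phi_w /char_poly /determinant; apply: eq_bigr => s _.
rewrite (bigID (fun i => s i == i)) /=.
rewrite (eq_bigr (fun i => 'X - (w1 i)%:P)) => [|i /eqP si]; last by rewrite !mxE si eqxx.
rewrite [X in _ * (_ * X)](eq_bigr (fun i => (- wadj e w w1 i (s i))%:P)); last first.
  by move=> i si; rewrite !mxE eq_sym (negbTE si) mulr0n sub0r rmorphN.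
rewrite -(rmorph_prod (@polyC R)).
rewrite [X in _ * (X * _) = _](eq_bigl (mem (~: perm_supp s))) => [|i]; last first.
  by rewrite !inE negbK.
rewrite [X in _ * (_ * X%:P) = _](eq_bigl (mem (perm_supp s))) => [|i]; last by rewrite !inE.
rewrite /perm_weight /char_compl -mul_polyC rmorphM rmorph_sign.
by rewrite -mulrA; congr (_ * _); rewrite mulrC.
Qed.

Lemma perm_weight_along s : perm_along e s ->
  perm_weight s = (-1) ^+ s * \prod_(i in perm_supp s) - w [set i; s i].
Proof.
move=> /perm_alongP sE; congr (_ * _); apply: eq_bigr => i isupp.
have si : s i != i by rewrite inE in isupp.
by rewrite !mxE eq_sym (negbTE si) sE.
Qed.

Lemma perm_weight_not_along s : ~~ perm_along e s -> perm_weight s = 0.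
Proof.
case/forallPn => i; rewrite negb_imply => /andP[si nei].
rewrite /perm_weight (bigD1 i) ?inE //= !mxE eq_sym (negbTE si) (negbTE nei).
by rewrite oppr0 mul0r mulr0.
Qed.

Lemma perm_weight_matching s : matching_perm e s ->
  perm_weight s = (-1) ^+ #|perm_pairs s| * `|\prod_(m in perm_pairs s) w m| ^+ 2.
Proof.
case/andP=> /perm_involP sK sE; rewrite perm_weight_along // prodrN.
rewrite (big_perm_pairs _ (fun m => w m) sK) card_supp_invol //.
rewrite exprM sqrrN !expr1n mul1r odd_perm_invol // signr_odd.
by rewrite real_normK ?num_real // expr2 big_split.
Qed.

(* A cyclic permutation of [k] vertices has sign [(-1)^(k-1)]. *)
Lemma perm_weight_cycle s x : perm_along e s ->
  perm_supp s = porbit s x -> x \in perm_supp s ->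
  perm_weight s = - \prod_(i in perm_supp s) w [set i; s i].
Proof.
move=> sE suppE xsupp; rewrite perm_weight_along // prodrN (odd_perm_cycle suppE xsupp).
by rewrite mulrA -[(-1) ^+ #|_|]signr_odd -signr_addb addNb addbb expr1 mulN1r.
Qed.

Hypotheses (e_sym : symmetric e) (e_irr : irreflexive e).

Lemma eta_w_perm_sum :
  eta_w e w w1 = \sum_(s | matching_perm e s) perm_weight s *: char_compl w1 (perm_supp s).
Proof.
rewrite /eta_w /mu_w.
under eq_bigr => S _ do rewrite (big_matching e_sym e_irr) scaler_sumr big_mkcond.
rewrite exchange_big [RHS]big_mkcond; apply: eq_bigr => s _ /=.
case: (boolP (matching_perm e s)) => sM /=; last by rewrite big1 // => S _; rewrite scaler0.
rewrite -char_compl_expand scaler_sumr [RHS]big_mkcond; apply: eq_bigr => S _ /=.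
case: (perm_supp s \subset S) => //.
rewrite perm_weight_matching // -card_supp_invol; last by case/andP: sM => /perm_involP.
by rewrite !scalerA mulrC.
Qed.

Lemma phi_w_sub_eta_w :
  phi_w e w w1 - eta_w e w w1 =
  \sum_(s | ~~ matching_perm e s) perm_weight s *: char_compl w1 (perm_supp s).
Proof.
by rewrite phi_w_perm_sum eta_w_perm_sum (bigID (matching_perm e)) /= addrC addrK.
Qed.

End PermExpansion.

Section GraphCycles.
Variables (n : nat) (e : rel 'I_n).
Hypothesis e_irr : irreflexive e.
Implicit Types (s : 'S_n) (c : seq 'I_n).

Lemma shortest_graph_cycle c : graph_cycle e c ->
  exists2 c0, graph_cycle e c0 & forall c', graph_cycle e c' -> (size c0 <= size c')%N.
Proof.
move=> Gc; pose P k := [exists t : k.-tuple 'I_n, graph_cycle e t].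
have cycleP c' : graph_cycle e c' -> P (size c') by move=> Gc'; apply/existsP; exists (in_tuple c').
have [g /existsP[c0 Gc0] g_min] := ex_minnP (ex_intro P _ (cycleP c Gc)).
by exists c0 => // c' /cycleP /g_min; rewrite size_tuple.
Qed.

Lemma porbit_graph_cycle s x : perm_along e s -> s (s x) != x ->
  graph_cycle e (traject s x #|porbit s x|).
Proof.
move=> /perm_alongP sE ssx; have xsupp := subsetP (porbit_supp ssx).
apply/and3P; split; last first.
- case k_def: #|porbit s x| (card_porbit_neq0 s x) => [//|k] _.
  rewrite trajectS /=.
  have -> : rcons (traject s (s x) k) x = traject s (s x) k.+1.
    by rewrite trajectSr -iterSr -k_def iter_porbit.
  apply: (@sub_in_path _ (mem (porbit s x)) (frel s)); last exact: fpath_traject.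
    by move=> y z yx _ /eqP <-; apply/sE/xsupp.
  by apply/allP => y; rewrite -trajectS => /trajectP[i _ ->]; rewrite -permX; exact: mem_porbit.
- exact: uniq_traject_porbit.
have sx : s x != x by apply: contraNneq ssx => sxE; rewrite !sxE.
have three : uniq [:: x; s x; s (s x)].
  by rewrite /= !inE negb_or eq_sym sx eq_sym ssx (inj_eq perm_inj) eq_sym sx.
apply: (uniq_leq_size three) => y; rewrite !inE -porbit_traject => /or3P[] /eqP->.
- exact: porbit_id.
- by rewrite -[s x]/(iter 1 s x) -permX mem_porbit.
- by rewrite -[s (s x)]/(iter 2 s x) -permX mem_porbit.
Qed.

Lemma forest_matching_perm s : forest e -> perm_along e s -> matching_perm e s.
Proof.
move=> acyclic sE; rewrite /matching_perm sE andbT.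
apply/forallP => x; apply: contraT => /(porbit_graph_cycle sE).
by rewrite (negbTE (acyclic _)).
Qed.

Lemma graph_cycle_perm c : graph_cycle e c ->
  exists s, [/\ perm_along e s, ~~ perm_invol s & perm_supp s = [set x in c]].
Proof.
case/and3P=> c3 c_uniq c_cycle.
have [a next2a] : exists a, next c (next c a) != a.
  clear c_cycle; move: c3 c_uniq; case: c => [|a [|b [|d r]]] //= _.
  rewrite !inE !negb_or => /and4P[/andP[ab /andP[ad _]] _ _ _].
  by exists a; rewrite eqxx (eq_sym b a) (negbTE ab) eqxx eq_sym.
exists (perm (can_inj (prev_next c_uniq))); split.
- apply/perm_alongP => x; rewrite inE permE => nx.
  apply: (next_cycle c_cycle); apply: contraR nx => xc.
  by rewrite next_nth (negbTE xc) eqxx.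
- by apply/forallPn; exists a; rewrite !permE.
apply/setP=> x; rewrite !inE permE; case: (boolP (x \in c)) => xc.
  by apply: contraTneq (next_cycle c_cycle xc) => ->; rewrite e_irr.
by rewrite next_nth (negbTE xc) eqxx.
Qed.

End GraphCycles.

Section Girth.
Variables (R : realFieldType) (n : nat) (e : rel 'I_n).
Variables (w : {set 'I_n} -> R) (w1 : 'I_n -> R).
Hypothesis w_pos : forall u v, e u v -> 0 < w [set u; v].
Variable g : nat.
Hypothesis girth_min : forall c, graph_cycle e c -> (g <= size c)%N.
Implicit Types (s : 'S_n).

Local Notation term s := (perm_weight e w w1 s *: char_compl w1 (perm_supp s)).

Lemma girth_le_porbit s : perm_along e s -> ~~ perm_invol s ->
  exists x, [/\ x \in perm_supp s, porbit s x \subset perm_supp s & (g <= #|porbit s x|)%N].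
Proof.
move=> sE /forallPn[x ssx]; exists x; split.
- by apply: (subsetP (porbit_supp ssx)); apply: porbit_id.
- exact: porbit_supp.
by rewrite -(size_traject s x #|porbit s x|) girth_min // porbit_graph_cycle.
Qed.

Lemma coef_term_girth_lt0 s : perm_along e s -> ~~ perm_invol s ->
  #|perm_supp s| = g -> (term s)`_(n - g) < 0.
Proof.
move=> sE sN suppg; have [x [xsupp orbit_supp gx]] := girth_le_porbit sE sN.
have suppE : perm_supp s = porbit s x.
  by apply/eqP; rewrite eq_sym eqEcard orbit_supp suppg.
rewrite coefZ -suppg coef_char_compl_supp mulr1 (perm_weight_cycle w w1 sE suppE xsupp).
rewrite oppr_lt0; apply: prodr_gt0 => i isupp.
by apply: w_pos; apply: (perm_alongP _ _ sE).
Qed.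

Lemma coef_term_girth_le0 s : ~~ matching_perm e s -> (term s)`_(n - g) <= 0.
Proof.
have [sE sN|/(perm_weight_not_along w w1)->] := boolP (perm_along e s); last first.
  by rewrite scale0r coef0.
have {}sN : ~~ perm_invol s by move: sN; rewrite /matching_perm sE andbT.
have [x [_ orbit_supp gx]] := girth_le_porbit sE sN.
case: (ltngtP g #|perm_supp s|) => [gsupp|suppg|suppg].
- by rewrite coefZ coef_char_compl_gt // mulr0.
- by have := leq_trans gx (subset_leq_card orbit_supp); rewrite leqNgt suppg.
- exact/ltW/coef_term_girth_lt0.
Qed.

End Girth.

Section ForestCriterion.
Variables (R : realFieldType) (n : nat) (e : rel 'I_n).
Variables (w : {set 'I_n} -> R) (w1 : 'I_n -> R).
Hypotheses (e_sym : symmetric e) (e_irr : irreflexive e).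
Hypothesis w_pos : forall u v, e u v -> 0 < w [set u; v].

Lemma forest_phi_w_eta_w : forest e -> phi_w e w w1 = eta_w e w w1.
Proof.
move=> acyclic; apply/eqP; rewrite -subr_eq0 phi_w_sub_eta_w //; apply/eqP/big1 => s sN.
have [sE|/(perm_weight_not_along w w1)->] := boolP (perm_along e s); last by rewrite scale0r.
by rewrite (forest_matching_perm acyclic sE) in sN.
Qed.

Lemma graph_cycle_phi_w_neq_eta_w c : graph_cycle e c -> phi_w e w w1 != eta_w e w w1.
Proof.
move=> /shortest_graph_cycle[c0 Gc0 c0_min].
have [s0 [s0E s0N s0_supp]] := graph_cycle_perm e_irr Gc0.
have s0_card : #|perm_supp s0| = size c0.
  by rewrite s0_supp cardsE; case/and3P: Gc0 => _ /card_uniqP.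
rewrite -subr_eq0 phi_w_sub_eta_w //; apply/negP => /eqP.
move/(congr1 (fun p : {poly R} => p`_(n - size c0))).
rewrite coef_sum coef0 (bigD1 s0) /=; last by rewrite negb_and s0N.
have := coef_term_girth_lt0 w1 w_pos c0_min s0E s0N s0_card.
have : \sum_(s | ~~ matching_perm e s && (s != s0))
         (perm_weight e w w1 s *: char_compl w1 (perm_supp s))`_(n - size c0) <= 0.
  by apply: sumr_le0 => s /andP[sN _]; apply: coef_term_girth_le0.
lra.
Qed.

End ForestCriterion.

Theorem corollary2p10 (R : realFieldType) (n : nat) (e : rel 'I_n)
    (w : {set 'I_n} -> R) (w1 : 'I_n -> R) :
  simple_graph e ->
  (forall u v : 'I_n, e u v -> 0 < w [set u; v]) ->
  (forest e <-> phi_w e w w1 = eta_w e w w1).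
Proof.
move=> [e_sym e_irr] w_pos; split; first exact: forest_phi_w_eta_w.
move=> phi_eta c; apply/negP => /(graph_cycle_phi_w_neq_eta_w w1 e_sym e_irr w_pos).
by rewrite phi_eta eqxx.
Qed.
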